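(* Let $(x(n))_{n\geq0}$ and $(y(n))_{n\geq0}$ be sequences of nonnegative integers with $x(0)=1$, $y(0)=0$, such that for every $n \geq 1$ the set $\{x(n), y(n)\}$ consists of the two smallest nonnegative integers not belonging to $\{x(k) : k \leq n-1\} \cup \{y(k) : k \leq n-1\}$, and such that for all $n \geq 0$, $x(x(n))$ and $y(y(n))$ are even while $x(y(n))$ and $y(x(n))$ are odd. Then $x(n) = a(n)$ and $y(n) = b(n)$ for all $n \geq 0$.
   Context: A nonnegative integer is odious if the sum of its binary digits is odd and evil if it is even. $(a(n))_{n\geq0}$ is the increasing sequence of odious numbers and $(b(n))_{n\geq 0}$ the increasing sequence of evil numbers, both indexed from $0$. *)

From mathcomp Require Import all_boot.
Set Implicit Arguments. Unset Strict Implicit. Unset Printing Implicit Defensive.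

Fixpoint bsum_aux (fuel n : nat) : nat :=
  match fuel with
  | 0 => 0
  | f.+1 => if n is 0 then 0 else odd n + bsum_aux f n./2
  end.
Definition bsum (n : nat) : nat := bsum_aux n n.

Definition odious (n : nat) : bool := odd (bsum n).
Definition evil (n : nat) : bool := ~~ odd (bsum n).

(* a n = n-th (0-indexed) odious number, b n = n-th evil number.
   Among 0..4n+3 there are 2n+2 odious and 2n+2 evil numbers
   (each pair {2k,2k+1} contains one of each), so the bound suffices. *)
Definition a (n : nat) : nat := nth 0 [seq m <- iota 0 (4 * n + 4) | odious m] n.
Definition b (n : nat) : nat := nth 0 [seq m <- iota 0 (4 * n + 4) | evil m] n.

Definition fresh (x y : nat -> nat) (n m : nat) : Prop :=
  forall k, k < n -> m <> x k /\ m <> y k.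

Definition two_smallest_fresh (x y : nat -> nat) (n : nat) : Prop :=
  [/\ x n <> y n, fresh x y n (x n), fresh x y n (y n) &
      forall m, fresh x y n m -> m <> x n -> m <> y n ->
        x n < m /\ y n < m].

(* Among consecutive fresh integers, the greedy rule forces {x n, y n} = {2n, 2n+1},
   so x n = 2n + e n and y n = 2n + ~~ e n for a bit e n.  Writing the parity
   conditions with this shape gives e (2n + c) = c (+) e n, which is exactly the
   doubling recursion of the complemented Thue-Morse bit; since odious and evil
   numbers also come one per pair {2n, 2n+1}, this identifies x with a and y with b. *)
From mathcomp Require Import all_boot.
From mathcomp Require Import zify.

Lemma bsum_aux_fuel f g n : n <= f -> n <= g -> bsum_aux f n = bsum_aux g n.
Proof.
elim: f g n => [|f IH] [|g] [|n] //= le_nf le_ng.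
by congr (_ + _); apply: IH; rewrite leq_uphalf_double -addnn; lia.
Qed.

Lemma bsum_double_add n (c : bool) : bsum (2 * n + c) = c + bsum n.
Proof.
rewrite /bsum; case E: (2 * n + c) => [|k].
  by case: n E => [|n]; case: c.
have -> : bsum_aux k.+1 k.+1 = odd k.+1 + bsum_aux k (k.+1)./2 by [].
have -> : k.+1 = c + n.*2 by rewrite -mul2n; lia.
rewrite half_bit_double oddD odd_double addbF (bsum_aux_fuel _ n) //; lia.
Qed.

Lemma odious_double_add n (c : bool) : odious (2 * n + c) = c (+) odious n.
Proof. by rewrite /odious bsum_double_add oddD; case: c. Qed.

Lemma filter_iota_pairs (p : pred nat) k :
    (forall i, p (2 * i).+1 = ~~ p (2 * i)) ->
  [seq m <- iota 0 (2 * k) | p m] = [seq 2 * i + ~~ p (2 * i) | i <- iota 0 k].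
Proof.
move=> p_pair; elim: k => [|k IH] //.
rewrite -[k.+1]addn1 mulnDr iotaD filter_cat IH iotaD map_cat /= !add0n p_pair.
by case: (p (2 * k)); rewrite /= ?addn0 ?addn1.
Qed.

Lemma nth_filter_iota_pairs (p : pred nat) n N :
    (forall i, p (2 * i).+1 = ~~ p (2 * i)) -> n < N ->
  nth 0 [seq m <- iota 0 (2 * N) | p m] n = 2 * n + ~~ p (2 * n).
Proof.
move=> p_pair lt_nN.
by rewrite filter_iota_pairs // (nth_map 0) ?size_iota // nth_iota.
Qed.

Lemma odious_double n : odious (2 * n) = odious n.
Proof. by have := odious_double_add n false; rewrite addn0. Qed.

Lemma odious_pairs i : odious (2 * i).+1 = ~~ odious (2 * i).
Proof. by have := odious_double_add i true; rewrite addn1 odious_double. Qed.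

Lemma aE n : a n = 2 * n + ~~ odious n.
Proof.
rewrite /a (_ : 4 * n + 4 = 2 * (2 * n + 2)); last lia.
by rewrite nth_filter_iota_pairs ?odious_double //; [exact: odious_pairs | lia].
Qed.

Lemma bE n : b n = 2 * n + odious n.
Proof.
rewrite /b (_ : 4 * n + 4 = 2 * (2 * n + 2)); last lia.
rewrite nth_filter_iota_pairs /evil -/(odious _) ?negbK ?odious_double //; last lia.
by move=> i; rewrite -!/(odious _) odious_pairs.
Qed.

Lemma eq_bit_double_rec (f g : nat -> bool) :
    f 0 = g 0 ->
    (forall n (c : bool), f (2 * n + c) = c (+) f n) ->
    (forall n (c : bool), g (2 * n + c) = c (+) g n) ->
  f =1 g.
Proof.
move=> fg0 f_rec g_rec n; elim: n {-2}n (leqnn n) => [|N IH] [|n] le_n //.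
have -> : n.+1 = 2 * (n.+1)./2 + odd n.+1.
  by rewrite -[n.+1 in LHS]odd_double_half -mul2n addnC.
by rewrite f_rec g_rec IH // leq_half_double -addnn; lia.
Qed.

Section GreedyPairs.

Variables x y : nat -> nat.

Definition consecutive_pair n :=
  (x n = 2 * n /\ y n = 2 * n + 1) \/ (x n = 2 * n + 1 /\ y n = 2 * n).

Lemma fresh_consecutive_pairs n m :
    (forall k, k < n -> consecutive_pair k) ->
  fresh x y n m <-> 2 * n <= m.
Proof.
move=> pairs; split=> [fresh_m | le_nm k lt_kn]; last by case: (pairs k lt_kn); lia.
rewrite leqNgt; apply/negP => lt_mn.
have [] := fresh_m m./2 ltac:(lia).
by have := odd_double_half m; rewrite -mul2n; case: (pairs m./2 ltac:(lia)); lia.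
Qed.

Lemma two_smallest_fresh_pair n :
    (forall k, k < n -> consecutive_pair k) -> two_smallest_fresh x y n ->
  consecutive_pair n.
Proof.
move=> pairs [ne_xy /(fresh_consecutive_pairs _ _ pairs) le_x
                    /(fresh_consecutive_pairs _ _ pairs) le_y least].
have fresh_ge m : 2 * n <= m -> fresh x y n m by move/fresh_consecutive_pairs; apply.
have taken m : 2 * n <= m <= 2 * n + 1 -> x n = m \/ y n = m.
  move=> /andP[le_m le_m1].
  case: (eqVneq m (x n)) => [<-|/eqP ne_x]; first by left.
  case: (eqVneq m (y n)) => [<-|/eqP ne_y]; first by right.
  have [] := least m (fresh_ge m le_m) ne_x ne_y; lia.
have := taken (2 * n) ltac:(lia); have := taken (2 * n + 1) ltac:(lia).
rewrite /consecutive_pair; lia.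
Qed.

Hypothesis x0 : x 0 = 1.
Hypothesis y0 : y 0 = 0.
Hypothesis greedy : forall n, 1 <= n -> two_smallest_fresh x y n.
Hypothesis parities : forall n,
  ~~ odd (x (x n)) /\ ~~ odd (y (y n)) /\ odd (x (y n)) /\ odd (y (x n)).

Lemma consecutive_pairs n : consecutive_pair n.
Proof.
elim: n {-2}n (leqnn n) => [|N IH] [|n] le_n; try by right.
by apply: two_smallest_fresh_pair => [k lt_kn|]; [apply: IH; lia | apply: greedy].
Qed.

Lemma x_double_add n : x n = 2 * n + odd (x n).
Proof. by case: (consecutive_pairs n) => -[-> _]; rewrite mul2n ?oddD odd_double ?addn0. Qed.

Lemma y_double_add n : y n = 2 * n + ~~ odd (x n).
Proof. by case: (consecutive_pairs n) => -[-> ->]; rewrite mul2n ?oddD odd_double ?addn0. Qed.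

(* Read the even x (x n) and the odd x (y n) at the two arguments 2n + e, 2n + ~~ e. *)
Lemma odd_x_double_add n (c : bool) : odd (x (2 * n + c)) = c (+) odd (x n).
Proof.
have [even_xx [_ [odd_xy _]]] := parities n.
rewrite [x n]x_double_add in even_xx; rewrite [y n]y_double_add in odd_xy.
by case: c; case: (odd (x n)) even_xx odd_xy => /= /negPf.
Qed.

Lemma odd_x_odious : odd \o x =1 negb \o odious.
Proof.
apply: eq_bit_double_rec => [|n c|n c] /=; first by rewrite x0.
  exact: odd_x_double_add.
by rewrite odious_double_add; case: c.
Qed.

End GreedyPairs.

Theorem theorem6 (x y : nat -> nat) :
  x 0 = 1 -> y 0 = 0 ->
  (forall n, 1 <= n -> two_smallest_fresh x y n) ->
  (forall n, ~~ odd (x (x n)) /\ ~~ odd (y (y n)) /\ odd (x (y n)) /\ odd (y (x n))) ->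
  forall n, x n = a n /\ y n = b n.
Proof.
move=> x0 y0 greedy parities n.
have /= odd_x := odd_x_odious _ _ x0 y0 greedy parities n.
rewrite aE bE (x_double_add _ _ x0 y0 greedy) (y_double_add _ _ x0 y0 greedy).
by rewrite odd_x negbK.
Qed.
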